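(* Let $\mathfrak{A}_6$ act on $\mathbb{P}^4=\{x_0+\cdots+x_5=0\}\subset\mathbb{P}^5$ by permuting the coordinates $x_0,\ldots,x_5$. Let $X$ be an $\mathfrak{A}_6$-invariant quartic threefold in $\mathbb{P}^4$ that contains an $\mathfrak{A}_6$-orbit of length at most six. Then $X=X_{\frac{7}{10}}$.
   Context: For $t\in\mathbb{C}$, $X_t\subset\mathbb{P}^4=\{x_0+\cdots+x_5=0\}\subset\mathbb{P}^5$ denotes the quartic threefold given by $\sum_{i=0}^5x_i^4=t\big(\sum_{i=0}^5x_i^2\big)^2$. *)

From HB Require Import structures.
From mathcomp Require Import all_boot all_order all_algebra all_fingroup.
From mathcomp Require Import mpoly.
Set Implicit Arguments. Unset Strict Implicit. Unset Printing Implicit Defensive.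
Import GRing.Theory Num.Theory.
Local Open Scope ring_scope.

(* Vectors of C^6 are functions 'I_6 -> C.  P^4 = {x_0+...+x_5 = 0} in P^5. *)
Definition in_hyp (C : ringType) (x : 'I_6 -> C) : Prop := \sum_(i < 6) x i = 0.

Definition proj_eq (C : ringType) (x y : 'I_6 -> C) : Prop :=
  exists2 l : C, l != 0 & y = (fun i => l * x i).

(* A_6 acting by permuting coordinates: an even permutation s sends the point
   [x] to [x o s^-1]; we index the group elements by s^-1 (also even). *)
Definition permc (C : ringType) (s : 'S_6) (x : 'I_6 -> C) : 'I_6 -> C :=
  fun i => x (s i).

Definition Xt_form (C : ringType) (t : C) (x : 'I_6 -> C) : C :=
  \sum_(i < 6) x i ^+ 4 - t * (\sum_(i < 6) x i ^+ 2) ^+ 2.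

From HB Require Import structures.
From mathcomp Require Import all_boot all_order all_algebra all_fingroup all_solvable.
From mathcomp Require Import mpoly.
From mathcomp Require Import ring zify.
Set Implicit Arguments. Unset Strict Implicit. Unset Printing Implicit Defensive.
Import GRing.Theory Num.Theory.
Local Open Scope ring_scope.

(* By simplicity of A_6 the multiplier character of F is trivial, so F is
   A_6-invariant on P^4. Averaging over A_6 gives a symmetric quartic, since
   every quartic monomial in six variables has two equal exponents and is fixed
   by the transposition swapping them. On the hyperplane e_1 = 0 the fundamental
   theorem on symmetric polynomials leaves only e_2^2 and e_4, hence F is a
   combination a p_4 + b p_2^2.
   A point whose orbit has at most six elements has a stabiliser of order at
   least 60 in A_6; acting on its cosets embeds A_6 into S_6, so the stabiliser
   has order 60 or 360 and contains an element of order 5, which rescales the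
   point. Hence the point is (t, ..., t, -5t) up to order, where p_4 = 630 t^4
   and p_2^2 = 900 t^4, and F vanishing there forces b = -7/10 a. *)

Section MultiplicativeCharacter.
Variables (gT : finGroupType) (G : {group gT}) (R : comPzRingType) (c : gT -> R).
Hypotheses (c1 : c 1%g = 1) (cM : {in G &, {morph c : x y / (x * y)%g >-> x * y}}).

Lemma mul_char_invr x : x \in G -> c x * c x^-1%g = 1.
Proof. by move=> Gx; rewrite -cM ?groupV // mulgV. Qed.

Lemma mul_char_conjg x y : x \in G -> y \in G -> c (x ^ y)%g = c x.
Proof.
move=> Gx Gy; rewrite /conjg !cM ?groupM ?groupV //.
by rewrite mulrCA [c y^-1 * _]mulrC mul_char_invr ?mulr1.
Qed.

Lemma mul_char_commg x y : x \in G -> y \in G -> c [~ x, y]%g = 1.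
Proof.
move=> Gx Gy; rewrite /commg cM ?groupV ?groupJ // mul_char_conjg //.
by rewrite mulrC mul_char_invr.
Qed.

(* The kernel of c is a normal subgroup containing every commutator. *)
Lemma simple_mul_char_trivial : simple G -> ~~ abelian G -> {in G, forall x, c x = 1}.
Proof.
move=> simG nabG.
pose K := [set x in G | c x == 1].
have gK : group_set K.
  apply/group_setP; split; first by rewrite inE group1 c1 eqxx.
  move=> x y; rewrite !inE => /andP[Gx /eqP cx] /andP[Gy /eqP cy].
  by rewrite groupM // cM // cx cy mulr1 eqxx.
have nKG : (Group gK <| G)%g.
  apply/andP; split; first by apply/subsetP => x; rewrite inE => /andP[].
  apply/subsetP => y Gy; rewrite inE; apply/subsetP => x.
  rewrite mem_conjg !inE groupJr ?groupV // => /andP[Gx].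
  by rewrite mul_char_conjg ?groupV // => ->; rewrite Gx.
have [_ /(_ _ nKG)[K1|KG]] := simpleP _ simG; last first.
  move=> x Gx; have : x \in Group gK by rewrite KG.
  by rewrite inE => /andP[_ /eqP].
case/negP: nabG; apply/centsP => x Gx y Gy; apply/commgP.
have : [~ x, y]%g \in Group gK by rewrite inE groupR // mul_char_commg ?eqxx.
by rewrite K1 inE.
Qed.

End MultiplicativeCharacter.

Local Notation Alt6 := ('Alt_('I_6))%g.

Lemma card_Alt6 : #|Alt6| = 360%N.
Proof.
have := card_Alt (T := 'I_6); rewrite card_ord => /(_ isT).
by rewrite (_ : 6`! = 720%N) //; lia.
Qed.

Lemma simple_Alt6 : simple Alt6.
Proof. by apply: simple_Alt5; rewrite card_ord. Qed.

Lemma Alt6_nonabelian : ~~ abelian Alt6.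
Proof.
have c3_even (i j k : 'I_6) : i != j -> i != k -> (tperm i j * tperm i k)%g \in Alt6.
  by move=> ij ik; rewrite Alt_even odd_permM !odd_tperm ij ik.
apply/negP => /centsP /(_ _ (c3_even 0 1 2 isT isT) _ (c3_even 0 3 4 isT isT)).
by move=> /permP /(_ 0); rewrite !permM !permE.
Qed.

Section PermCoordinates.
Variable R : nzRingType.
Implicit Types (x : 'I_6 -> R) (s t : 'S_6).

Lemma permcM s t x : permc s (permc t x) =1 permc (s * t)%g x.
Proof. by move=> i; rewrite /permc permM. Qed.

Lemma permc1 x : permc 1%g x =1 x.
Proof. by move=> i; rewrite /permc perm1. Qed.

Lemma in_hyp_permc s x : in_hyp x -> in_hyp (permc s x).
Proof.
by rewrite /in_hyp /permc => hx; rewrite -[RHS]hx [RHS](reindex_inj (@perm_inj _ s)).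
Qed.

End PermCoordinates.

Lemma Alt6_semi_invariant_form_invariant (K : fieldType) (F : {mpoly K[6]}) :
  (exists2 x : 'I_6 -> K, in_hyp x & F.@[x] != 0) ->
  (forall s : 'S_6, ~~ odd_perm s ->
     exists c : K, forall x, in_hyp x -> F.@[permc s x] = c * F.@[x]) ->
  forall s : 'S_6, s \in Alt6 -> forall x, in_hyp x -> F.@[permc s x] = F.@[x].
Proof.
move=> [x1 hx1 Fx1] Hinv.
pose c s := F.@[permc s x1] / F.@[x1].
have Fc s : s \in Alt6 -> forall x, in_hyp x -> F.@[permc s x] = c s * F.@[x].
  rewrite Alt_even => es x hx; have [cs Hcs] := Hinv s es.
  by rewrite Hcs // /c Hcs // mulfK.
have c1 : c 1%g = 1 by rewrite /c (meval_eq _ (permc1 x1)) divff.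
have cM : {in Alt6 &, {morph c : s t / (s * t)%g >-> s * t}}.
  move=> s t As At /=; apply: (mulIf Fx1).
  have htx1 := in_hyp_permc t hx1.
  by rewrite -Fc ?groupM // -(meval_eq _ (permcM s t x1)) !Fc // mulrA.
move=> s As x hx.
by rewrite Fc // (simple_mul_char_trivial c1 cM simple_Alt6 Alt6_nonabelian) ?mul1r.
Qed.

Lemma mdeg_pigeonhole n (m : 'X_{1..n}) :
  ((mdeg m).+1 < n)%N -> exists i j : 'I_n, i != j /\ m i = m j.
Proof.
move=> ltmn; have m_le i : (m i < (mdeg m).+1)%N.
  by rewrite ltnS mdegE (bigD1 i) //= leq_addr.
pose f i := Ordinal (m_le i).
have /injectivePn [i [j ij fij]] : ~~ injectiveb f.
  by apply/injectiveP => /leq_card; rewrite !card_ord leqNgt ltmn.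
by exists i, j; split => //; move/(congr1 val): fij.
Qed.

(* A transposition of two equal exponents fixes a monomial, so odd permutations
   act on the coefficients like even ones. *)
Lemma even_invariant_symmetric n (R : nzRingType) d (p : {mpoly R[n]}) :
  p \is d.-homog -> (d.+1 < n)%N -> (forall s, ~~ odd_perm s -> msym s p = p) ->
  p \is symmetric.
Proof.
move=> homp ltdn invp; apply/issymP => s; apply/mpolyP => m; rewrite mcoeff_sym.
have [dm|dm] := eqVneq (mdeg m) d; last first.
  have dms : mdeg [multinom m (s i) | i < n] != d by rewrite mdeg_mperm.
  by rewrite (dhomog_nemf_coeff homp dm) (dhomog_nemf_coeff homp dms).
case es : (odd_perm s); last by rewrite -mcoeff_sym invp ?es.
have [i [j [ij mij]]] : exists i j : 'I_n, i != j /\ m i = m j.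
  by apply: mdeg_pigeonhole; rewrite dm.
have mt : [multinom m (tperm i j k) | k < n] = m.
  by apply/mnmP => k; rewrite mnmE; case: tpermP => // ->.
have -> : s = (s * tperm i j * tperm i j)%g by rewrite -mulgA tperm2 mulg1.
by rewrite mpermM mt -mcoeff_sym invp // odd_permM odd_tperm ij es.
Qed.

Lemma dhomog_msym n (R : nzRingType) d (p : {mpoly R[n]}) s :
  p \is d.-homog -> msym s p \is d.-homog.
Proof.
move=> homp; apply/dhomogP => m; rewrite mcoeff_msupp mcoeff_sym => pm.
have := dhomog_mf homp (x := [multinom m (s i) | i < n]).
rewrite mcoeff_msupp => /(_ pm).
by move=> <-; exact: esym (mdeg_mperm m s).
Qed.

Lemma meval_msym (R : comNzRingType) s (p : {mpoly R[6]}) x :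
  (msym s p).@[x] = p.@[permc s x].
Proof.
elim/mpolyind: p => [|c m p _ _ IH]; first by rewrite msym0 !meval0.
rewrite msymD msymZ !mevalD !mevalZ IH msymX !mevalX; congr (_ * _ + _).
rewrite (reindex_inj (@perm_inj _ s)); apply: eq_bigr => j _.
by rewrite mnmE permK.
Qed.

Lemma Alt6_symmetrization (R : comNzRingType) d (F : {mpoly R[6]}) :
  F \is d.-homog -> (d.+1 < 6)%N ->
  (forall s, s \in Alt6 -> forall x, in_hyp x -> F.@[permc s x] = F.@[x]) ->
  exists2 P : {mpoly R[6]}, P \is symmetric /\ P \is d.-homog &
    forall x, in_hyp x -> P.@[x] = F.@[x] *+ #|Alt6|.
Proof.
move=> homF ltd6 invF; pose P := \sum_(s in Alt6) msym s F.
have homP : P \is d.-homog by apply: rpred_sum => s _; exact: dhomog_msym.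
exists P; first split => //.
- apply: (even_invariant_symmetric homP ltd6) => t et.
  rewrite raddf_sum [RHS](reindex_inj (mulIg t)) /=.
  apply: eq_big => [s|s _]; last by rewrite msymMm.
  by rewrite groupMr // Alt_even.
- move=> x hx; rewrite raddf_sum -sumr_const /=; apply: eq_bigr => s As.
  by rewrite meval_msym invF.
Qed.

Local Notation i0 := (@Ordinal 6 0 isT).
Local Notation i1 := (@Ordinal 6 1 isT).
Local Notation i2 := (@Ordinal 6 2 isT).
Local Notation i3 := (@Ordinal 6 3 isT).
Local Notation i4 := (@Ordinal 6 4 isT).
Local Notation i5 := (@Ordinal 6 5 isT).

Lemma big_ord6 (T : Type) (idx : T) (op : T -> T -> T) (F : 'I_6 -> T) :
  \big[op/idx]_(i < 6) F i =
  op (F i0) (op (F i1) (op (F i2) (op (F i3) (op (F i4) (op (F i5) idx))))).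
Proof.
have enum6 : enum 'I_6 = [:: i0; i1; i2; i3; i4; i5].
  by apply: (inj_map val_inj); rewrite val_enum_ord.
by rewrite unlock /index_enum /= -enumT enum6.
Qed.

Lemma mnm6_eq (m m' : 'X_{1..6}) :
  m i0 = m' i0 -> m i1 = m' i1 -> m i2 = m' i2 ->
  m i3 = m' i3 -> m i4 = m' i4 -> m i5 = m' i5 -> m = m'.
Proof.
move=> h0 h1 h2 h3 h4 h5; apply/mnmP => -[[|[|[|[|[|[|k]]]]]] Hk] //;
  by rewrite (bool_irrelevance Hk isT).
Qed.

Definition in_span2 (T : Type) (R : nzRingType) (D : T -> Prop) (u v f : T -> R) :=
  exists a b : R, forall x, D x -> f x = a * u x + b * v x.

Section SymmetricQuarticOnHyperplane.
Variable R : comNzRingType.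

(* The exponents of e_2^2 and e_4 in the tuple (e_1, ..., e_6). *)
Definition mnm_e2sq : 'X_{1..6} := (U_(i1) + U_(i1))%MM.
Definition mnm_e4 : 'X_{1..6} := U_(i3)%MM.

(* The only monomials of weight 4 in (e_1, ..., e_6) not divisible by e_1. *)
Lemma prod_mnmwgt4 (v : 'I_6 -> R) (m : 'X_{1..6}) :
  v i0 = 0 -> mnmwgt m = 4%N ->
  \prod_i v i ^+ m i = (m == mnm_e2sq)%:R * v i1 ^+ 2 + (m == mnm_e4)%:R * v i3.
Proof.
move=> v0; rewrite /mnmwgt big_ord6 /= => wm; rewrite big_ord6 /= v0.
have e2sq_e4 : (mnm_e2sq == mnm_e4) = false.
  by apply/negP => /eqP/mnmP/(_ i1); rewrite !mnmDE !mnm1E.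
have [m0|m0] := posnP (m i0); last first.
  have mnm0 (m' : 'X_{1..6}) : m' i0 = 0%N -> (m == m') = false.
    by move=> m'0; apply: contraTF m0 => /eqP ->; rewrite m'0.
  rewrite !mnm0 ?mnmDE ?mnm1E // expr0n gtn_eqF //.
  by rewrite !mul0r add0r.
have [[m1 [m2 [m3 [m4 m5]]]]|[m1 [m2 [m3 [m4 m5]]]]] :
    (m i1 = 2 /\ m i2 = 0 /\ m i3 = 0 /\ m i4 = 0 /\ m i5 = 0)%N \/
    (m i1 = 0 /\ m i2 = 0 /\ m i3 = 1 /\ m i4 = 0 /\ m i5 = 0)%N by lia.
- rewrite m0 m1 m2 m3 m4 m5.
  have -> : m = mnm_e2sq by apply: mnm6_eq; rewrite ?mnmDE ?mnm1E.
  by rewrite e2sq_e4 eqxx /=; ring.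
- rewrite m0 m1 m2 m3 m4 m5.
  have -> : m = mnm_e4 by apply: mnm6_eq; rewrite ?mnmDE ?mnm1E.
  by rewrite eq_sym e2sq_e4 eqxx /=; ring.
Qed.

Lemma big_msupp_mcoeff_eq (t : {mpoly R[6]}) (m0 : 'X_{1..6}) :
  \sum_(m <- msupp t) t@_m * (m == m0)%:R = t@_m0.
Proof.
rewrite [in RHS](mpolyE t); elim: (msupp t) => [|m s IH].
  by rewrite !big_nil mcoeff0.
by rewrite !big_cons mcoeffD mcoeffZ mcoeffX IH.
Qed.

Lemma symmetric_quartic_on_hyperplane (Q : {mpoly R[6]}) :
  Q \is symmetric -> Q \is 4.-homog ->
  in_span2 (@in_hyp R) (fun x => (mesym 6 R 2).@[x] ^+ 2) (fun x => (mesym 6 R 4).@[x])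
    (fun x => Q.@[x]).
Proof.
move=> symQ homQ; have [t [tQ homt]] := sym_fundamental_homog symQ homQ.
exists t@_mnm_e2sq, t@_mnm_e4 => x hx.
rewrite -tQ comp_mpoly_meval; set v := (fun i : 'I_6 => _); rewrite mevalE.
have v0 : v i0 = 0.
  rewrite /v tnth_mktuple mesym1E raddf_sum -[RHS]hx /=.
  by apply: eq_bigr => i _; rewrite mevalXU.
rewrite (eq_big_seq (fun m => t@_m * ((m == mnm_e2sq)%:R * v i1 ^+ 2 +
                                      (m == mnm_e4)%:R * v i3))); last first.
  by move=> m mt; rewrite prod_mnmwgt4 // (dhomog_mf homt mt).
under eq_bigr do rewrite mulrDr !mulrA.
rewrite big_split -!big_distrl /= !big_msupp_mcoeff_eq /v !tnth_mktuple.
by rewrite expr2 mulrA.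
Qed.

End SymmetricQuarticOnHyperplane.

Lemma in_span2_change_basis (T : Type) (K : fieldType) (D : T -> Prop)
    (u v g h f : T -> K) y z :
  D y -> D z -> g y * h z != g z * h y ->
  in_span2 D u v g -> in_span2 D u v h -> in_span2 D u v f -> in_span2 D g h f.
Proof.
move=> Dy Dz ghyz [a1 [b1 Eg]] [a2 [b2 Eh]] [a [b Ef]].
pose d := a1 * b2 - a2 * b1.
have det_gh : g y * h z - g z * h y = d * (u y * v z - u z * v y).
  by rewrite (Eg y) // (Eg z) // (Eh y) // (Eh z) // /d; ring.
have dN0 : d != 0.
  by apply: contraNneq ghyz => d0; rewrite -subr_eq0 det_gh d0 mul0r.
exists ((a * b2 - b * a2) / d), ((b * a1 - a * b1) / d) => x Dx.
apply: (mulfI dN0); rewrite (Ef x) // (Eg x) // (Eh x) // /d.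
by field.
Qed.

Definition psum (R : nzRingType) k (x : 'I_6 -> R) := \sum_(i < 6) x i ^+ k.

Section PowerSums.
Variable R : comNzRingType.

Local Notation psum_poly k := (\sum_(i < 6) 'X_i ^+ k : {mpoly R[6]}).

Lemma msymXU (s : 'S_6) (i : 'I_6) : msym s ('X_i : {mpoly R[6]}) = 'X_(s i).
Proof.
rewrite msymX; congr 'X_[_]; apply/mnmP => j; rewrite mnmE !mnm1E.
by rewrite (canF_eq (permK s)).
Qed.

Lemma psum_poly_sym k : psum_poly k \is symmetric.
Proof.
apply/issymP => s; rewrite raddf_sum /=.
under eq_bigr do rewrite rmorphXn /= msymXU.
by rewrite [RHS](reindex_inj (@perm_inj _ s)).
Qed.

Lemma psum_poly_homog k : psum_poly k \is k.-homog.
Proof.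
apply: rpred_sum => i _; rewrite -[k in _ \is k.-homog]mul1n; apply: dhomogMn.
by rewrite dhomogX; apply/eqP; exact: mdeg1.
Qed.

Lemma meval_psum_poly k x : (psum_poly k).@[x] = psum k x.
Proof.
by rewrite raddf_sum; apply: eq_bigr => i _; rewrite /= rmorphXn /= mevalXU.
Qed.

Lemma psum4_span :
  in_span2 (@in_hyp R) (fun x => (mesym 6 R 2).@[x] ^+ 2) (fun x => (mesym 6 R 4).@[x])
    (psum 4).
Proof.
have [a [b Ep]] :=
  symmetric_quartic_on_hyperplane (psum_poly_sym 4) (psum_poly_homog 4).
by exists a, b => x hx; rewrite -Ep // meval_psum_poly.
Qed.

Lemma psum2_sq_span :
  in_span2 (@in_hyp R) (fun x => (mesym 6 R 2).@[x] ^+ 2) (fun x => (mesym 6 R 4).@[x])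
    (fun x => psum 2 x ^+ 2).
Proof.
have [a [b Ep]] := symmetric_quartic_on_hyperplane (rpredX 2 (psum_poly_sym 2))
  (dhomogMn 2 (psum_poly_homog 2)).
by exists a, b => x hx; rewrite -Ep // rmorphXn /= meval_psum_poly.
Qed.

End PowerSums.

(* p_4 and p_2^2 are independent on the hyperplane, as their values at
   (1,-1,0,0,0,0) and (1,1,-1,-1,0,0) show. *)
Lemma symmetric_quartic_psum_span (K : numFieldType) (Q : {mpoly K[6]}) :
  Q \is symmetric -> Q \is 4.-homog ->
  in_span2 (@in_hyp K) (psum 4) (fun x => psum 2 x ^+ 2) (fun x => Q.@[x]).
Proof.
move=> symQ homQ.
pose y (i : 'I_6) : K := if i == 0 :> nat then 1 else if i == 1 :> nat then -1 else 0.
pose z (i : 'I_6) : K := if (i < 2)%N then 1 else if (i < 4)%N then -1 else 0.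
have hy : in_hyp y by rewrite /in_hyp big_ord6 /y /=; ring.
have hz : in_hyp z by rewrite /in_hyp big_ord6 /z /=; ring.
apply: (in_span2_change_basis hy hz _ (psum4_span K) (psum2_sq_span K)
  (symmetric_quartic_on_hyperplane symQ homQ)).
rewrite -subr_eq0 /psum !big_ord6 /y /z /=.
by rewrite (_ : _ - _ = 16%:R) ?pnatr_eq0 //; ring.
Qed.

Section Colinear.
Variables (K : fieldType) (n : nat).
Implicit Types (u v w : 'I_n -> K).

Definition colinear u w : bool := [forall i, [forall j, u i * w j == u j * w i]].
Definition nonzero_vec u : bool := [exists i, u i != 0].

Lemma colinear_scale u w l : (forall i, w i = l * u i) -> colinear u w.
Proof.
by move=> Ew; apply/forallP => i; apply/forallP => j; rewrite !Ew; apply/eqP; ring.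
Qed.

Lemma colinearP u w :
  nonzero_vec u -> reflect (exists l, forall i, w i = l * u i) (colinear u w).
Proof.
move=> nzu; apply: (iffP idP) => [/forallP uw|[l]]; last exact: colinear_scale.
have /existsP[k uk] := nzu; exists (w k / u k) => i.
have /forallP /(_ k) /eqP uwik := uw i.
by apply: (mulfI uk); rewrite -uwik; field.
Qed.

Lemma colinear_sym u w : colinear u w = colinear w u.
Proof.
by apply/forallP/forallP => uw i; apply/forallP => j;
  have /forallP /(_ i) /eqP := uw j; rewrite eq_sym mulrC [w _ * _]mulrC => ->.
Qed.

Lemma eq_colinear u u' w w' : u =1 u' -> w =1 w' -> colinear u w = colinear u' w'.
Proof.
by move=> Eu Ew; apply: eq_forallb => i; apply: eq_forallb => j; rewrite !Eu !Ew.
Qed.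

Lemma colinear_trans v u w :
  nonzero_vec v -> colinear u v -> colinear v w -> colinear u w.
Proof.
move=> nzv; rewrite colinear_sym => /(colinearP _ nzv)[l Eu] /(colinearP _ nzv)[l' Ew].
by apply/forallP => i; apply/forallP => j; rewrite !Eu !Ew; apply/eqP; ring.
Qed.

End Colinear.

Section ProjectiveStabiliser.
Variable K : fieldType.
Implicit Types (u w x : 'I_6 -> K).

Lemma colinear_permc s u w : colinear u w -> colinear (permc s u) (permc s w).
Proof.
move=> /forallP uw; apply/forallP => i; apply/forallP => j.
by have /forallP /(_ (s j)) := uw (s i).
Qed.

Lemma nonzero_permc s x : nonzero_vec x -> nonzero_vec (permc s x).
Proof.
by case/existsP => k xk; apply/existsP; exists (s^-1 k)%g; rewrite /permc permKV.
Qed.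

Lemma proj_eq_colinear u w : proj_eq u w -> colinear u w.
Proof. by case=> l _ ->; apply: colinear_scale. Qed.

Lemma proj_eq_nonzero u w : proj_eq u w -> nonzero_vec w -> nonzero_vec u.
Proof.
case=> l _ -> /existsP[k]; rewrite mulf_eq0 negb_or => /andP[_ uk].
by apply/existsP; exists k.
Qed.

Definition proj_stab x : {set 'S_6} := [set s in Alt6 | colinear x (permc s x)].

Lemma proj_stab_group_set x : group_set (proj_stab x).
Proof.
apply/group_setP; split.
  apply/setIdP; split; first exact: group1.
  by apply: (colinear_scale (l := 1)) => i; rewrite permc1 mul1r.
move=> s t /setIdP[As xs] /setIdP[At xt]; apply/setIdP; split; first exact: groupM.
have [nzx|zx] := boolP (nonzero_vec x); last first.
  apply: (colinear_scale (l := 0)) => i; rewrite mul0r.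
  by apply: contraNeq zx => xi; apply/existsP; exists ((s * t)%g i).
rewrite -(eq_colinear (frefl x) (permcM s t x)).
exact: colinear_trans (nonzero_permc s nzx) xs (colinear_permc s xt).
Qed.

Canonical proj_stab_group x := Group (proj_stab_group_set x).

Lemma proj_stab_sub x : proj_stab x \subset Alt6.
Proof. by apply/subsetP => s /setIdP[]. Qed.

Lemma proj_stabP x s :
  nonzero_vec x -> s \in proj_stab x -> exists l, forall i, x (s i) = l * x i.
Proof. by move=> nzx /setIdP[_ /(colinearP _ nzx)]. Qed.

End ProjectiveStabiliser.

Lemma card_bigcup_le (T I : finType) (A : I -> {set T}) :
  (#|\bigcup_i A i| <= \sum_i #|A i|)%N.
Proof.
apply: (big_ind2 (fun (B : {set T}) k => #|B| <= k)%N) => [|B k B' k' leB leB'|//].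
  by rewrite cards0.
by rewrite cardsU; apply: leq_trans (leq_subr _ _) (leq_add leB leB').
Qed.

Lemma card_le_cover_lcosets (gT : finGroupType) (G H : {group gT}) (I : finType)
    (A : I -> {set gT}) :
  G \subset \bigcup_i A i -> (forall i, {in A i &, forall s t, s^-1 * t \in H})%g ->
  (#|G| <= #|I| * #|H|)%N.
Proof.
move=> sGA AH; have cardA i : (#|A i| <= #|H|)%N.
  have [->|[s As]] := set_0Vmem (A i); first by rewrite cards0.
  rewrite -(card_lcoset H s); apply/subset_leq_card/subsetP => t At.
  by rewrite mem_lcoset (AH i).
apply: leq_trans (subset_leq_card sGA) _; apply: leq_trans (card_bigcup_le A) _.
by rewrite -sum_nat_const; apply: leq_sum => i _.
Qed.

(* Each of the at most six points of the orbit has a fibre inside one left coset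
   of the stabiliser, and #|A_6| = 360 = 6 * 60. *)
Lemma card_proj_stab_ge60 (K : fieldType) (x : 'I_6 -> K) (ys : 'I_6 -> 'I_6 -> K) :
  nonzero_vec x ->
  (forall s : 'S_6, ~~ odd_perm s -> exists j, proj_eq (ys j) (permc s x)) ->
  (60 <= #|proj_stab x|)%N.
Proof.
move=> nzx orbx.
pose A j := [set s in Alt6 | nonzero_vec (ys j) && colinear (ys j) (permc s x)].
have: (#|Alt6| <= #|'I_6| * #|proj_stab x|)%N.
  apply: (@card_le_cover_lcosets _ _ _ _ A).
    apply/subsetP => s As; have [j yjs] : exists j, proj_eq (ys j) (permc s x).
      by apply: orbx; rewrite -Alt_even.
    apply/bigcupP; exists j => //; rewrite inE As /=.
    by rewrite (proj_eq_nonzero yjs (nonzero_permc s nzx)) proj_eq_colinear.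
  move=> j s t /setIdP[As /andP[nzy yjs]] /setIdP[At /andP[_ yjt]].
  apply/setIdP; split; first by rewrite groupM ?groupV.
  have st : colinear (permc s x) (permc t x).
    by apply: colinear_trans nzy _ yjt; rewrite colinear_sym.
  have := colinear_permc s^-1 st.
  rewrite (eq_colinear (permcM _ _ _) (permcM _ _ _)) mulVg.
  by rewrite (eq_colinear (permc1 x) (frefl _)).
by rewrite card_Alt6 card_ord; lia.
Qed.

Section CosetAction.
Local Open Scope group_scope.

(* G acts on the right cosets of H with kernel gcore H G. *)
Lemma card_le_indexg_fact (gT : finGroupType) (G H : {group gT}) :
  H \subset G -> gcore H G = 1 -> (#|G| <= #|G : H|`!)%N.
Proof.
move=> sHG coreH1; pose R := rcosets H G.
pose phi a := restr_perm R (actperm 'Rs a).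
have NR a : a \in G -> actperm 'Rs a \in 'N(R | 'P).
  move=> Ga; apply/astabsP => X /=; rewrite /aperm actpermE.
  by have /actsP := actsRs_rcosets H G; apply.
have phiE a X : a \in G -> X \in R -> phi a X = X :* a.
  by move=> Ga XR; rewrite /phi restr_permE ?NR // actpermE /= rcosetE.
have inj_phi : {in G &, injective phi}.
  move=> a b Ga Gb eab; suff : a * b^-1 \in gcore H G.
    by rewrite coreH1 inE -eq_mulgV1 => /eqP.
  rewrite -astabRs_rcosets; apply/astabP => X XR /=.
  have := congr1 (fun p : {perm {set gT}} => p X) eab; rewrite /= !phiE // => e.
  by rewrite rcosetE rcosetM e -rcosetM mulgV rcoset1.
rewrite -[#|G : H|]/#|R| -(card_in_imset inj_phi) -(perm.card_Sym R).
apply/subset_leq_card/subsetP.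
by move=> _ /imsetP[a _ ->]; rewrite inE restr_perm_on.
Qed.

End CosetAction.

Lemma Alt6_subgroup_dvd5 (H : {group 'S_6}) :
  H \subset Alt6 -> (60 <= #|H|)%N -> (5 %| #|H|)%N.
Proof.
move=> sHA geH.
have [_ /(_ _ (gcore_normal sHA))[core1|coreA]] := simpleP _ simple_Alt6; last first.
  have sAH : Alt6 \subset H by rewrite -coreA gcore_sub.
  have -> : H :=: Alt6 by apply/eqP; rewrite eqEsubset sHA.
  by rewrite card_Alt6.
have := card_le_indexg_fact sHA core1; have := Lagrange sHA; rewrite card_Alt6.
move: #|_ : H|%g => k Lk fact.
have le_k6 : (60 * k <= 360)%N by rewrite -Lk leq_mul2r geH orbT.
case: k Lk fact le_k6 => [|[|[|[|[|[|[|k]]]]]]] //= Lk _ le_k6; lia.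
Qed.

Section Order5Permutations.
Local Open Scope group_scope.

Lemma order5_perm6_cycle (g : 'S_6) : #[g] = 5%N ->
  exists a f, g f = f /\ forall i, i != f -> exists k, i = (g ^+ k) a.
Proof.
move=> og; have porbit_dvd5 x : (#|porbit g x| %| 5)%N.
  by have := dvdn_orbit 'P <[g]> x; rewrite -/(order g) og porbit.unlock.
have [a porbit_a] : exists a, #|porbit g a| != 1%N.
  apply/existsP; apply: contraT; rewrite negb_exists => /forallP fixg.
  suff g1 : g = 1 by move: og; rewrite g1 order1.
  apply/permP => x; rewrite perm1.
  have /cards1P[y py] := negPn (fixg x).
  have := porbit_id g x; have := mem_porbit g 1 x; rewrite py expg1 !inE.
  by move=> /eqP -> /eqP ->.
have card_porbit_a : #|porbit g a| = 5%N.
  move: (porbit_dvd5 a) (card_porbit_neq0 g a) porbit_a.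
  by case: #|porbit g a| => [|[|[|[|[|[|n]]]]]].
have /cards1P[f porbitC] : #|~: porbit g a| == 1%N.
  by apply/eqP; have := cardsC (porbit g a); rewrite card_porbit_a card_ord; lia.
have f_notin : f \notin porbit g a by rewrite -in_setC porbitC set11.
have in_porbit i : i != f -> i \in porbit g a.
  by move=> ifn; apply: contraR ifn => ni; rewrite -in_set1 -porbitC inE.
exists a, f; split; last by move=> i /in_porbit /porbitP.
apply/eqP; apply: contraR (in_porbit (g f)) _.
by rewrite porbit_sym -[g f]/((g ^+ 1) f) porbit_perm porbit_sym.
Qed.

End Order5Permutations.

Lemma order5_eigenvector (K : fieldType) (g : 'S_6) (l : K) (x : 'I_6 -> K) :
  #[g]%g = 5%N -> nonzero_vec x -> (forall i, x (g i) = l * x i) ->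
  (exists f t, forall i, i != f -> x i = t) \/ injective x.
Proof.
move=> og nzx xg.
have xgX k i : x ((g ^+ k)%g i) = l ^+ k * x i.
  elim: k i => [|k IHk] i; first by rewrite expg0 perm1 mul1r.
  by rewrite expgSr permM xg IHk exprS mulrA.
have [a [f [gf cyc]]] := order5_perm6_cycle og.
have [l1|ln1] := eqVneq l 1.
  by left; exists f, (x a) => i /cyc[k ->]; rewrite xgX l1 expr1n mul1r.
right.
have xf0 : x f = 0.
  have /eqP := xg f; rewrite gf -subr_eq0 -{1}[x f]mul1r -mulrBl mulf_eq0.
  by rewrite subr_eq0 eq_sym (negbTE ln1) => /eqP.
have xa0 : x a != 0.
  apply: contraTneq nzx => xa0; rewrite /nonzero_vec negb_exists.
  apply/forallP => i; rewrite negbK.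
  have [->|/cyc[k ->]] := eqVneq i f; first by rewrite xf0.
  by rewrite xgX xa0 mulr0.
have prim_l : 5.-primitive_root l.
  have l5 : l ^+ 5 = 1.
    have := xgX #[g]%g a; rewrite expg_order perm1 og => xa5.
    by apply: (mulIf xa0); rewrite mul1r -xa5.
  have [m prim_m m_dvd] := prim_order_exists (isT : (0 < 5)%N) l5.
  have /primeP[_ /(_ m m_dvd)/orP[/eqP m1|/eqP <-//]] : prime 5 by [].
  by move: ln1; rewrite -(prim_expr_order prim_m) m1 expr1 eqxx.
have xi0 i : i != f -> x i != 0.
  by move=> /cyc[k ->]; rewrite xgX mulf_neq0 // expf_neq0 // (prim_root_eq0 prim_l).
move=> i j xij; have [if_|inf] := eqVneq i f; have [jf|jnf] := eqVneq j f.
- by rewrite if_ jf.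
- by move: (xi0 j jnf); rewrite -xij if_ xf0 eqxx.
- by move: (xi0 i inf); rewrite xij jf xf0 eqxx.
- have [[k ik] [k' jk']] := (cyc i inf, cyc j jnf).
  move: xij; rewrite ik jk' !xgX => /(mulIf xa0)/eqP.
  rewrite (eq_prim_root_expr prim_l) => /eqP kk'.
  by rewrite -(expg_mod_order g k) -(expg_mod_order g k') og kk'.
Qed.

Lemma card_proj_stab_le6_injective (K : fieldType) (x : 'I_6 -> K) :
  injective x -> (#|proj_stab x| <= 6)%N.
Proof.
move=> injx; have [a xa0] : exists a, x a != 0.
  have [x00|] := eqVneq (x 0) 0; last by exists 0.
  by exists 1; apply/eqP => x10; have := @injx 1 0; rewrite x10 x00 => /(_ erefl).
have nzx : nonzero_vec x by apply/existsP; exists a.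
have inj_a : {in proj_stab x &, injective (fun s : 'S_6 => s a)}.
  move=> s t Ss St /= sta.
  have [ls Els] := proj_stabP nzx Ss; have [lt Elt] := proj_stabP nzx St.
  have lst : ls = lt by apply: (mulIf xa0); rewrite -Els -Elt sta.
  by apply/permP => i; apply: injx; rewrite Els Elt lst.
by rewrite -(card_in_imset inj_a); apply: leq_trans (max_card _) _; rewrite card_ord.
Qed.

Lemma sum_const_but_one (R : nzRingType) (x : 'I_6 -> R) f t (G : R -> R) :
  (forall i, i != f -> x i = t) -> \sum_(i < 6) G (x i) = G (x f) + G t *+ 5.
Proof.
move=> xt; rewrite (bigD1 f) //=; congr (_ + _).
by rewrite (eq_bigr (fun _ => G t)) => [|i /xt ->//]; rewrite sumr_const cardC1 card_ord.
Qed.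

Lemma in_hyp_const_but_one (R : nzRingType) (x : 'I_6 -> R) f t :
  (forall i, i != f -> x i = t) -> in_hyp x -> x f = - (t *+ 5).
Proof.
by move=> xt; rewrite /in_hyp (sum_const_but_one id xt) /= => /eqP; rewrite addr_eq0 => /eqP.
Qed.

(* The stabiliser of [x] has order at least 60, hence contains an element of
   order 5, which acts on x by a scalar. *)
Lemma small_orbit_point (K : fieldType) (x : 'I_6 -> K) (ys : 'I_6 -> 'I_6 -> K) :
  nonzero_vec x -> in_hyp x ->
  (forall s : 'S_6, ~~ odd_perm s -> exists j, proj_eq (ys j) (permc s x)) ->
  exists f t, t != 0 /\ forall i, i != f -> x i = t.
Proof.
move=> nzx hx orbx; have ge60 := card_proj_stab_ge60 nzx orbx.
have [g Sg og] := Cauchy (isT : prime 5) (Alt6_subgroup_dvd5 (proj_stab_sub x) ge60).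
have [l xg] := proj_stabP nzx Sg.
have [[f [t xt]]|injx] := order5_eigenvector og nzx xg; last first.
  by have := card_proj_stab_le6_injective injx; lia.
exists f, t; split => //; apply: contraTneq nzx => t0.
rewrite /nonzero_vec negb_exists; apply/forallP => i; rewrite negbK.
have [->|/xt->] := eqVneq i f; last by rewrite t0.
by rewrite (in_hyp_const_but_one xt hx) t0 mul0rn oppr0.
Qed.

Lemma Alt6_invariant_quartic_span (K : numFieldType) (F : {mpoly K[6]}) :
  F \is 4.-homog ->
  (exists2 x : 'I_6 -> K, in_hyp x & F.@[x] != 0) ->
  (forall s : 'S_6, ~~ odd_perm s ->
     exists c : K, forall x, in_hyp x -> F.@[permc s x] = c * F.@[x]) ->
  in_span2 (@in_hyp K) (psum 4) (fun x => psum 2 x ^+ 2) (fun x => F.@[x]).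
Proof.
move=> homF nzF semiF; have invF := Alt6_semi_invariant_form_invariant nzF semiF.
have [P [symP homP] EP] := Alt6_symmetrization homF (isT : (5 < 6)%N) invF.
have [a [b EPab]] := symmetric_quartic_psum_span symP homP.
have N0 : (#|Alt6|%:R : K) != 0 by rewrite card_Alt6 pnatr_eq0.
exists (a / #|Alt6|%:R), (b / #|Alt6|%:R) => x hx; apply: (mulIf N0).
by rewrite mulr_natr -EP // EPab //; field.
Qed.

Theorem lemma4p9 (C : numClosedFieldType) (F : {mpoly C[6]})
  (* F is a quartic form *)
  (HF4 : F \is 4.-homog)
  (* F does not vanish identically on the hyperplane P^4, so X = {F = 0} is a
     quartic threefold in P^4 *)
  (HFnz : exists2 x : 'I_6 -> C, in_hyp x & F.@[x] != 0)
  (* X is A_6-invariant: for every even permutation, F o g is proportional to F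
     on the hyperplane *)
  (Hinv : forall s : 'S_6, ~~ odd_perm s ->
            exists c : C, forall x : 'I_6 -> C, in_hyp x ->
              F.@[permc s x] = c * F.@[x])
  (* X contains an A_6-orbit of length at most six: a point [x0] of P^4 whose
     orbit lies in X and consists of at most six points *)
  (Horb : exists x0 : 'I_6 -> C,
      [/\ (exists i, x0 i != 0), in_hyp x0,
          (forall s : 'S_6, ~~ odd_perm s -> F.@[permc s x0] = 0) &
          exists ys : 'I_6 -> ('I_6 -> C),
            forall s : 'S_6, ~~ odd_perm s ->
              exists j : 'I_6, proj_eq (ys j) (permc s x0)]) :
  (* X = X_{7/10} as hypersurfaces of P^4 *)
  exists c : C, forall x : 'I_6 -> C, in_hyp x ->
    F.@[x] = c * Xt_form (7%:R / 10%:R) x.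
Proof.
have [a [b Fab]] := Alt6_invariant_quartic_span HF4 HFnz Hinv.
have [x0 [[i x0i] hx0 Fx0 [ys orbx0]]] := Horb.
have nzx0 : nonzero_vec x0 by apply/existsP; exists i.
have [f [t [t0 x0t]]] := small_orbit_point nzx0 hx0 orbx0.
have F0 : F.@[x0] = 0 by rewrite -(meval_eq _ (permc1 x0)) Fx0 ?odd_perm1.
have ab0 : (630%:R * a + 900%:R * b) * t ^+ 4 = 0.
  rewrite -F0 Fab // /psum (sum_const_but_one (fun y => y ^+ 4) x0t).
  rewrite (sum_const_but_one (fun y => y ^+ 2) x0t) (in_hyp_const_but_one x0t hx0).
  by ring.
have b_a : b = - (7%:R / 10%:R) * a.
  move/eqP: ab0; rewrite mulf_eq0 expf_eq0 (negbTE t0) andbF orbF => /eqP ab0.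
  have n900 : (900%:R : C) != 0 by rewrite pnatr_eq0.
  apply: (mulfI n900); rewrite -[900%:R * b]subr0 -ab0.
  by field.
by exists a => x hx; rewrite Fab // /Xt_form /psum b_a; ring.
Qed.
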